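(* Let $n_u<n$ be positive integers, $n_b=n-n_u$, $\mathbf{A}\in\mathbb{R}^{n_u\times n_b}$, and $\mathbf{C}=[\mathbf{I}_{n_u}\;\; -\mathbf{A}]\in\mathbb{R}^{n_u\times n}$. Let $p\ge 2$ experts be given; for $j=1,\dots,p$ let $1\le n_j\le n$ and let $\mathbf{L}_j\in\{0,1\}^{n_j\times n}$ be a selection matrix (its rows are distinct rows of $\mathbf{I}_n$), and assume every $i\in\{1,\dots,n\}$ is selected by at least one $\mathbf{L}_j$. Let $m=\sum_{j=1}^p n_j$, $\mathbf{K}=[\mathbf{L}_1^\top\;\cdots\;\mathbf{L}_p^\top]^\top\in\{0,1\}^{m\times n}$, let $\widehat{\mathbf{y}}=[\widehat{\mathbf{y}}^{1\top}\cdots\widehat{\mathbf{y}}^{p\top}]^\top\in\mathbb{R}^m$ with $\widehat{\mathbf{y}}^j\in\mathbb{R}^{n_j}$, and let $\mathbf{W}\in\mathbb{R}^{m\times m}$ be symmetric positive definite. Then the solution of the linearly constrained quadratic program $$\widetilde{\mathbf{y}}^c=\arg\min_{\mathbf{y}\in\mathbb{R}^n}(\widehat{\mathbf{y}}-\mathbf{K}\mathbf{y})^\top\mathbf{W}^{-1}(\widehat{\mathbf{y}}-\mathbf{K}\mathbf{y})\quad\text{s.t. }\mathbf{C}\mathbf{y}=\mathbf{0}_{(n_u\times 1)}$$ is given by $\widetilde{\mathbf{y}}^c=\boldsymbol{\Psi}^\top\widehat{\mathbf{y}}=\mathbf{M}\boldsymbol{\Omega}^\top\widehat{\mathbf{y}}$,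 where $\mathbf{W}_c=(\mathbf{K}^\top\mathbf{W}^{-1}\mathbf{K})^{-1}$, $\boldsymbol{\Omega}=\mathbf{W}^{-1}\mathbf{K}\mathbf{W}_c$, $\mathbf{M}=\mathbf{I}_n-\mathbf{W}_c\mathbf{C}^\top(\mathbf{C}\mathbf{W}_c\mathbf{C}^\top)^{-1}\mathbf{C}$, and $\boldsymbol{\Psi}^\top=\mathbf{M}\boldsymbol{\Omega}^\top\in\mathbb{R}^{n\times m}$.
   Context: Setting: a linearly constrained multiple time series whose target forecast vector $\mathbf{y}\in\mathbb{R}^n$ must satisfy $\mathbf{C}\mathbf{y}=\mathbf{0}$ (coherence). Expert $j$ provides base forecasts $\widehat{\mathbf{y}}^j$ of the subvector $\mathbf{L}_j\mathbf{y}$; these are stacked ''by expert'' into $\widehat{\mathbf{y}}$, and $\mathbf{W}$ plays the role of the covariance matrix of the base forecast errors $\widehat{\mathbf{y}}-\mathbf{K}\mathbf{y}$. $\widetilde{\mathbf{y}}^c$ is called the optimal (minimum mean square error) linear coherent combined forecast. *)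

From HB Require Import structures.
From mathcomp Require Import all_boot all_order all_algebra.
Set Implicit Arguments. Unset Strict Implicit. Unset Printing Implicit Defensive.
Import Order.TTheory GRing.Theory Num.Theory.
Local Open Scope ring_scope.

Definition is_selection (R : ringType) (k n : nat) (L : 'M[R]_(k, n)) : Prop :=
  exists s : 'I_k -> 'I_n, injective s /\
    L = \matrix_(r < k, c < n) (c == s r)%:R.

Definition spd (R : numDomainType) (m : nat) (W : 'M[R]_m) : Prop :=
  W^T = W /\ forall x : 'cV[R]_m, x != 0 -> 0 < (x^T *m W *m x) ord0 ord0.

Definition qloss (R : fieldType) (m n : nat) (W : 'M[R]_m) (K : 'M[R]_(m, n))
  (yhat : 'cV[R]_m) (y : 'cV[R]_n) : R :=
  ((yhat - K *m y)^T *m invmx W *m (yhat - K *m y)) ord0 ord0.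

From mathcomp Require Import all_boot all_order all_algebra.
Set Implicit Arguments. Unset Strict Implicit. Unset Printing Implicit Defensive.
Import Order.TTheory GRing.Theory Num.Theory.
Local Open Scope ring_scope.

(* Write Q = W^-1 and G = K^T Q K. Since every coordinate is selected by some
   expert, K has full column rank, so G is positive definite, and so is the
   Schur complement S = C G^-1 C^T because C = [I -A] has full row rank. The candidate yc = G^-1 (K^T Q yhat - C^T lam), with the Lagrange
   multiplier lam = S^-1 C G^-1 K^T Q yhat, is feasible and satisfies the
   normal equations K^T Q (yhat - K yc) = C^T lam. For a feasible y = yc + d
   the cross terms of the loss then vanish, so
   loss (yc + d) = loss yc + d^T G d > loss yc whenever d <> 0. *)

Section SelectionMatrices.
Variable R : nzRingType.

Lemma is_selection_rowsub k n (L : 'M[R]_(k, n)) :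
  is_selection L -> exists s : 'I_k -> 'I_n, L = rowsub s 1%:M.
Proof.
case=> s [_ ->]; exists s.
by apply/matrixP => r c; rewrite !mxE eq_sym.
Qed.

Lemma mxcol_selection_inj p (nj : 'I_p -> nat) n
    (L : forall j : 'I_p, 'M[R]_(nj j, n)) (x : 'cV[R]_n) :
  (forall j, is_selection (L j)) ->
  (forall i : 'I_n, exists j, exists r : 'I_(nj j), L j r i = 1) ->
  (\mxcol_j L j) *m x = 0 -> x = 0.
Proof.
move=> Lsel Lcover Kx0; apply/matrixP => i k; rewrite (ord1 k) mxE.
have [j [r Ljri]] := Lcover i; have [s Ls] := is_selection_rowsub (Lsel j).
have sri : s r = i.
  by move: Ljri; rewrite Ls !mxE; case: eqP => // _ /esym/eqP; rewrite oner_eq0.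
have Ljx0 : rowsub s x = 0.
  by rewrite rowsubE -Ls -(mxcolK L j) submxcol_mul Kx0 submxcol0.
by have := congr1 (fun X : 'cV_(nj j) => X r 0) Ljx0; rewrite !mxE sri.
Qed.

End SelectionMatrices.

Lemma mul_tr_row_mx1_eq0 (R : pzRingType) m n
    (B : 'M[R]_(m, n)) (z : 'cV[R]_m) :
  ((row_mx 1%:M B)^T *m z == 0) = (z == 0).
Proof.
rewrite tr_row_mx mul_col_mx col_mx_eq0 trmx1 mul1mx.
by apply/andb_idr => /eqP->; rewrite mulmx0.
Qed.

Section PositiveDefinite.
Variable R : numFieldType.

Lemma spd_unitmx m (X : 'M[R]_m) : spd X -> X \in unitmx.
Proof.
case=> _ Xpos; rewrite unitmxE unitfE; apply/det0P => -[v v_neq0 vX0].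
have /Xpos : v^T != 0 by rewrite trmx_eq0.
by rewrite trmxK vX0 mul0mx mxE ltxx.
Qed.

Lemma spd_invmx m (X : 'M[R]_m) : spd X -> spd (invmx X).
Proof.
move=> Xspd; have Xunit := spd_unitmx Xspd; case: Xspd => Xsym Xpos.
split=> [|x x_neq0]; first by rewrite trmx_inv Xsym.
set z := invmx X *m x.
have xE : x = X *m z by rewrite mulmxA mulmxV // mul1mx.
have z_neq0 : z != 0 by apply: contraNneq x_neq0 => z0; rewrite xE z0 mulmx0.
rewrite -mulmxA -/z {1}xE trmx_mul Xsym.
exact: Xpos.
Qed.

Lemma spd_congr m n (Q : 'M[R]_m) (K : 'M[R]_(m, n)) :
  (forall x : 'cV[R]_n, K *m x = 0 -> x = 0) -> spd Q -> spd (K^T *m Q *m K).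
Proof.
move=> Kinj [Qsym Qpos]; split; first by rewrite !trmx_mul trmxK Qsym mulmxA.
move=> x x_neq0.
have Kx_neq0 : K *m x != 0 by apply: contraNneq x_neq0 => /Kinj ->.
by have := Qpos _ Kx_neq0; rewrite trmx_mul !mulmxA.
Qed.

End PositiveDefinite.

Section ConstrainedGLS.
Variables (R : numFieldType) (m n k : nat).
Variables (W : 'M[R]_m) (K : 'M[R]_(m, n)) (C : 'M[R]_(k, n)) (yhat : 'cV[R]_m).
Hypothesis W_spd : spd W.
Hypothesis K_inj : forall x : 'cV[R]_n, K *m x = 0 -> x = 0.
Hypothesis CT_inj : forall z : 'cV[R]_k, C^T *m z = 0 -> z = 0.

Local Notation Q := (invmx W).
Local Notation G := (K^T *m Q *m K).
Local Notation Wc := (invmx G).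
Local Notation S := (C *m Wc *m C^T).
Local Notation b := (K^T *m Q *m yhat).
Local Notation lam := (invmx S *m (C *m Wc *m b)).
Local Notation yc :=
  ((1%:M - Wc *m C^T *m invmx S *m C) *m (Q *m K *m Wc)^T *m yhat).

Lemma gls_info_spd : spd G.
Proof. exact: spd_congr K_inj (spd_invmx W_spd). Qed.

Lemma gls_schur_spd : spd S.
Proof. by have := spd_congr CT_inj (spd_invmx gls_info_spd); rewrite trmxK. Qed.

Lemma gls_solutionE : yc = Wc *m (b - C^T *m lam).
Proof.
have [Wsym _] := W_spd; have [Wcsym _] := spd_invmx gls_info_spd.
by rewrite !trmx_mul Wcsym trmx_inv Wsym mulmxBr !mulmxBl mul1mx !mulmxA.
Qed.

Lemma gls_feasible : C *m yc = 0.
Proof.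
have Sunit := spd_unitmx gls_schur_spd.
by rewrite gls_solutionE !mulmxBr !mulmxA mulmxV // mul1mx subrr.
Qed.

Lemma gls_normal_eq : K^T *m Q *m (yhat - K *m yc) = C^T *m lam.
Proof.
have Gunit := spd_unitmx gls_info_spd.
rewrite gls_solutionE mulmxBr [_ *m (K *m _)]mulmxA mulKVmx //.
by rewrite opprB addrC subrK.
Qed.

Lemma qloss_gls_shift d : C *m d = 0 ->
  qloss W K yhat (yc + d) = qloss W K yhat yc + (d^T *m G *m d) 0 0.
Proof.
move=> Cd0; have [Qsym _] := spd_invmx W_spd.
have residualE : yhat - K *m (yc + d) = (yhat - K *m yc) - K *m d.
  by rewrite mulmxDr opprD addrA.
rewrite /qloss residualE; have := gls_normal_eq.
move: (yhat - K *m yc) => r normal_eq.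
have cross_dr : (K *m d)^T *m Q *m r = 0.
  have -> : (K *m d)^T *m Q *m r = d^T *m (K^T *m Q *m r).
    by rewrite trmx_mul !mulmxA.
  by rewrite normal_eq mulmxA -trmx_mul Cd0 trmx0 mul0mx.
have cross_rd : r^T *m Q *m (K *m d) = 0.
  have -> : r^T *m Q *m (K *m d) = ((K *m d)^T *m Q *m r)^T.
    by rewrite !trmx_mul !trmxK Qsym -mulmxA.
  by rewrite cross_dr trmx0.
rewrite [(r - _)^T]linearB /= !mulmxBl !mulmxBr cross_dr cross_rd.
rewrite subr0 sub0r opprK.
by rewrite trmx_mul !mulmxA mxE [X in _ + X]mxE.
Qed.

Lemma gls_argmin : C *m yc = 0 /\
  (forall y, C *m y = 0 -> y != yc -> qloss W K yhat yc < qloss W K yhat y).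
Proof.
split=> [|y Cy0 y_neq_yc]; first exact: gls_feasible.
have Cd0 : C *m (y - yc) = 0 by rewrite mulmxBr Cy0 gls_feasible subrr.
have d_neq0 : y - yc != 0 by rewrite subr_eq0.
have -> : y = yc + (y - yc) by rewrite addrC subrK.
rewrite qloss_gls_shift // ltrDl.
exact: gls_info_spd.2.
Qed.

End ConstrainedGLS.

Theorem theorem1 (R : realFieldType) (nu nb : nat) (A : 'M[R]_(nu, nb))
  (p : nat) (nj : 'I_p -> nat) (L : forall j : 'I_p, 'M[R]_(nj j, nu + nb))
  (W : 'M[R]_(\sum_(j < p) nj j)) (yhat : 'cV[R]_(\sum_(j < p) nj j)) :
  (0 < nu)%N -> (0 < nb)%N -> (2 <= p)%N ->
  (forall j, 1 <= nj j <= nu + nb)%N ->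
  (forall j, is_selection (L j)) ->
  (forall i : 'I_(nu + nb), exists j : 'I_p, exists r : 'I_(nj j), L j r i = 1) ->
  spd W ->
  let C : 'M[R]_(nu, nu + nb) := row_mx 1%:M (- A) in
  let K : 'M[R]_(\sum_(j < p) nj j, nu + nb) := \mxcol_(j < p) L j in
  let Wc := invmx (K^T *m invmx W *m K) in
  let Omega := invmx W *m K *m Wc in
  let M := 1%:M - Wc *m C^T *m invmx (C *m Wc *m C^T) *m C in
  let PsiT := M *m Omega^T in
  let yc := PsiT *m yhat in
  (* yc is the (unique) solution of the constrained problem *)
  C *m yc = 0 /\
  (forall y : 'cV[R]_(nu + nb), C *m y = 0 -> y != yc ->
     qloss W K yhat yc < qloss W K yhat y).
Proof.
move=> _ _ _ _ Lsel Lcover W_spd C K.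
apply: gls_argmin => [//|x|z /eqP].
- exact: mxcol_selection_inj.
- by rewrite mul_tr_row_mx1_eq0 => /eqP.
Qed.
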